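(* Let $\mathcal{G}$ be a $k$-uniform hypergraph with $n$ vertices. Then for every $j\in V(\mathcal{G})$, \[ \alpha_j(\mathcal{G})\leq\frac{(k-1)d_j}{n-1}. \]
   Context: A $k$-uniform hypergraph $\mathcal{G}$ has vertex set $V(\mathcal{G})=[n]$ and edge set $E(\mathcal{G})$ of $k$-element subsets of $V(\mathcal{G})$; $d_j$ is the number of edges containing vertex $j$. For $\mathbf{x}\in\mathbb{R}^n$, $\mathcal{L}_\mathcal{G}\mathbf{x}^k=\sum_{\{i_1,\ldots,i_k\}\in E(\mathcal{G})}\left(x_{i_1}^k+\cdots+x_{i_k}^k-k\,x_{i_1}\cdots x_{i_k}\right)$; the inverse Perron value of vertex $j$ is $\alpha_j(\mathcal{G})=\min\{\mathcal{L}_\mathcal{G}\mathbf{x}^k : \mathbf{x}\in\mathbb{R}^n_+,\ \sum_{i=1}^n x_i^k=1,\ x_j=0\}$. *)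

From HB Require Import structures.
From mathcomp Require Import all_boot all_order all_algebra.
From mathcomp Require Import classical_sets reals.
Set Implicit Arguments. Unset Strict Implicit. Unset Printing Implicit Defensive.
Import Order.TTheory GRing.Theory Num.Theory.
Local Open Scope ring_scope.
Local Open Scope classical_set_scope.

Definition uniform_hypergraph (n k : nat) (E : {set {set 'I_n}}) : Prop :=
  forall e, e \in E -> #|e| = k.

Definition hdeg (n : nat) (E : {set {set 'I_n}}) (j : 'I_n) : nat :=
  #|[set e in E | j \in e]|.

Definition lapform (R : realType) (n k : nat) (E : {set {set 'I_n}})
    (x : 'I_n -> R) : R :=
  \sum_(e in E) ((\sum_(i in e) x i ^+ k) - k%:R * \prod_(i in e) x i).

Definition feasible (R : realType) (n k : nat) (j : 'I_n) (x : 'I_n -> R) : Prop :=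
  (forall i, 0 <= x i) /\ \sum_i x i ^+ k = 1 /\ x j = 0.

(* inverse Perron value alpha_j(G): the minimum (taken as the infimum, which is
   attained by compactness) of L_G x^k over feasible x *)
Definition alpha (R : realType) (n k : nat) (E : {set {set 'I_n}}) (j : 'I_n) : R :=
  inf [set lapform k E x | x in [set x | feasible k j x]].

(* Evaluate L_G at the vector that vanishes at j and is constant, equal to
   (n-1)^(-1/k), elsewhere.  An edge avoiding j contributes k y^k - k y^k = 0,
   an edge through j contributes (k-1) y^k - k * 0, so L_G x^k = (k-1) d_j/(n-1),
   and alpha_j is at most this value.  The infimum is a genuine lower bound
   because L_G x^k >= -k |E| on the feasible set, whose entries lie in [0,1].
   For k = 0 the feasible set is empty, so alpha_j is the junk value inf set0 = 0,
   and d_j = 0 as well. *)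
From HB Require Import structures.
From mathcomp Require Import all_boot all_order all_algebra.
From mathcomp Require Import classical_sets reals exp.
Set Implicit Arguments. Unset Strict Implicit. Unset Printing Implicit Defensive.
Import Order.TTheory GRing.Theory Num.Theory.
Local Open Scope classical_set_scope.
Local Open Scope ring_scope.

Definition punctured (R : realType) (n : nat) (j : 'I_n) (y : R) : 'I_n -> R :=
  fun i => if i == j then 0 else y.

Lemma hdeg_uniform0 (n : nat) (E : {set {set 'I_n}}) (j : 'I_n) :
  uniform_hypergraph 0 E -> hdeg E j = 0%N.
Proof.
move=> hE; apply/eqP; rewrite cards_eq0; apply/eqP/setP => e; rewrite !inE.
apply/negbTE/andP => -[eE je].
by move/eqP: (hE e eE); rewrite cards_eq0 => /eqP e0; rewrite e0 inE in je.
Qed.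

Lemma alpha_exponent0 (R : realType) (n : nat) (E : {set {set 'I_n}})
    (j : 'I_n) :
  n != 1%N -> alpha R 0 E j = 0.
Proof.
move=> n_neq1; rewrite /alpha (_ : [set _ | x in _] = set0) ?inf0 //.
apply/seteqP; split => // r /= [x [_ [sum1 _]] _].
move: sum1; under eq_bigr do rewrite expr0.
by rewrite sumr_const card_ord => /eqP; rewrite pnatr_eq1 (negbTE n_neq1).
Qed.

Lemma edge_term_punctured (R : realType) (n k : nat) (j : 'I_n) (y : R)
    (e : {set 'I_n}) :
  (0 < k)%N -> #|e| = k ->
  \sum_(i in e) punctured j y i ^+ k - k%:R * \prod_(i in e) punctured j y i
  = if j \in e then (k%:R - 1) * y ^+ k else 0.
Proof.
case: k => // k _ card_e; case: ifP => je.
- rewrite (bigD1 j) // (bigD1 j (P := mem e)) //= /punctured eqxx.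
  rewrite mul0r mulr0 subr0 expr0n add0r.
  rewrite (eq_bigr (fun=> y ^+ k.+1)); last by move=> i /andP[_ /negbTE ->].
  have card_ej : #|[pred i in e | i != j]| = k.
    apply/eqP; rewrite -eqSS -card_e (cardD1 j e) je add1n eqSS.
    by apply/eqP/eq_card => i; rewrite !inE andbC.
  by rewrite sumr_const card_ej -natr1 addrK mulr_natl.
- have off_j i : i \in e -> punctured j y i = y.
    by move=> ie; rewrite /punctured; case: eqP => // ij; rewrite -ij ie in je.
  rewrite [\sum_(i in e) _](eq_bigr (fun=> y ^+ k.+1)) => [|i /off_j -> //].
  rewrite [\prod_(i in e) _](eq_bigr (fun=> y)) => [|i /off_j //].
  by rewrite sumr_const prodr_const card_e mulr_natl subrr.
Qed.

Lemma lapform_punctured (R : realType) (n k : nat) (E : {set {set 'I_n}})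
    (j : 'I_n) (y : R) :
  (0 < k)%N -> uniform_hypergraph k E ->
  lapform k E (punctured j y) = ((k%:R - 1) * y ^+ k) *+ hdeg E j.
Proof.
move=> k_gt0 hE; rewrite /lapform.
under eq_bigr => e eE do rewrite edge_term_punctured ?hE //.
rewrite -big_mkcondr sumr_const /hdeg.
by congr (_ *+ _); apply: eq_card => e; rewrite inE.
Qed.

Lemma le1_sum_powers (R : realType) (n k : nat) (x : 'I_n -> R) :
  (forall i, 0 <= x i) -> \sum_i x i ^+ k.+1 = 1 -> forall i, x i <= 1.
Proof.
move=> x_ge0 sum1 i; rewrite leNgt; apply/negP => x_gt1.
have : x i ^+ k.+1 <= 1.
  rewrite -sum1 (bigD1 i) //= lerDl.
  by apply: sumr_ge0 => l _; exact: exprn_ge0.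
by rewrite leNgt exprn_egt1 // x_gt1.
Qed.

Lemma lapform_ge (R : realType) (n k : nat) (E : {set {set 'I_n}})
    (x : 'I_n -> R) :
  (forall i, 0 <= x i <= 1) -> \sum_(e in E) (- k%:R) <= lapform k E x.
Proof.
move=> x01; apply: ler_sum => e _.
rewrite -[X in X <= _]add0r lerD //.
  by apply: sumr_ge0 => i _; apply: exprn_ge0; case/andP: (x01 i).
by rewrite lerN2 ler_piMr ?ler0n // prodr_ile1.
Qed.

Lemma alpha_le_lapform (R : realType) (n k : nat) (E : {set {set 'I_n}})
    (j : 'I_n) (x : 'I_n -> R) :
  feasible k.+1 j x -> alpha R k.+1 E j <= lapform k.+1 E x.
Proof.
move=> fx; apply: ge_inf; last by exists x.
exists (\sum_(e in E) (- k.+1%:R)) => _ [z [z_ge0 [sum1 _]] <-].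
by apply: lapform_ge => i; rewrite z_ge0 (le1_sum_powers z_ge0 sum1).
Qed.

Lemma feasible_punctured (R : realType) (n k : nat) (j : 'I_n) (y : R) :
  (1 < n)%N -> 0 <= y -> y ^+ k.+1 = (n%:R - 1)^-1 ->
  feasible k.+1 j (punctured j y).
Proof.
move=> n_gt1 y_ge0 yk; split; first by move=> i; rewrite /punctured; case: eqP.
split; last by rewrite /punctured eqxx.
have n_gt0 := ltnW n_gt1.
rewrite (bigD1 j) //= /punctured eqxx expr0n add0r.
rewrite (eq_bigr (fun=> (n%:R - 1)^-1)); last by move=> i /negbTE ->.
rewrite sumr_const cardC1 card_ord -{1}(prednK n_gt0) -natr1 addrK.
by rewrite -(mulr_natr (n.-1%:R)^-1) mulVf // pnatr_eq0 -lt0n -ltnS prednK.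
Qed.

Theorem theorem3p6 (R : realType) (n k : nat) (E : {set {set 'I_n}})
    (hn : (1 < n)%N) (hE : uniform_hypergraph k E) (j : 'I_n) :
  alpha R k E j <= ((k%:R - 1) * (hdeg E j)%:R) / (n%:R - 1).
Proof.
case: k hE => [|k] hE.
  by rewrite hdeg_uniform0 // mulr0 mul0r alpha_exponent0 // gtn_eqF.
have c_ge0 : 0 <= (n%:R - 1 : R)^-1 by rewrite invr_ge0 subr_ge0 ler1n ltnW.
set y := (n%:R - 1 : R)^-1 `^ (k.+1%:R)^-1.
have yk : y ^+ k.+1 = (n%:R - 1)^-1.
  by rewrite -powR_mulrn ?powR_ge0 // -powRrM mulVf ?powRr1 // pnatr_eq0.
have := alpha_le_lapform E (feasible_punctured j hn (powR_ge0 _ _) yk).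
by rewrite lapform_punctured // yk -(mulr_natr _ (hdeg E j)) mulrAC.
Qed.
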